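(* Let $X$ and $Y$ be complexes in $\mathcal{C}_{\mathcal{I}}(\mathcal{P}(\Lambda))$ such that $X^i=Y^i=0$ for all $i>0$, and suppose there is $t>0$ with $X^{-i}=0$ for all $i>t$ and $X^{-t}\neq 0$. If $f:X\to Y$ is an irreducible morphism, then $Y^{-k}=0$ for all $k\ge t+2$.
   Context: $\Lambda$ is a finite-dimensional non-semisimple algebra over a field $k$ and $\mathcal{P}(\Lambda)$ the category of finitely generated projective right $\Lambda$-modules. $\mathcal{C}_{\mathcal{I}}(\mathcal{P}(\Lambda))$ denotes the category of cochain complexes $(X^n,d^n)$, $d^n:X^n\to X^{n+1}$, of finitely generated projective $\Lambda$-modules whose differentials are radical (image contained in the radical of the target), with morphisms of complexes. A morphism is irreducible if it is neither a split monomorphism nor a split epimorphism and in any factorization $f=hg$ either $g$ is a split monomorphism or $h$ is a split epimorphism. *)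

From HB Require Import structures.
From mathcomp Require Import all_boot all_order all_algebra all_field.
Set Implicit Arguments. Unset Strict Implicit. Unset Printing Implicit Defensive.
Import GRing.Theory.
Local Open Scope ring_scope.

Section Defs.
Variables (F : fieldType) (L : falgType F).

(* A finite-dimensional right L-module, realised on row vectors 'rV[F]_rdim,
   with right action  v . a := v *m ract a. *)
Record rmod := RMod {
  rdim : nat;
  ract : L -> 'M[F]_rdim;
  ract_lin : forall (c : F) (a b : L), ract (c *: a + b) = c *: ract a + ract b;
  ract1 : ract 1 = 1%:M;
  ractM : forall a b : L, ract (a * b) = ract a *m ract b }.

(* Module homomorphisms M -> N are the matrices A acting by v |-> v *m A
   that commute with the action. *)
Definition is_hom (M N : rmod) (A : 'M[F]_(rdim M, rdim N)) :=
  forall a : L, ract M a *m A = A *m ract N a.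

(* Submodules of M (given by row spaces of square matrices). *)
Definition submod (M : rmod) (U : 'M[F]_(rdim M)) :=
  forall a : L, (U *m ract M a <= U)%MS.

Definition maxsubmod (M : rmod) (U : 'M[F]_(rdim M)) :=
  [/\ submod U, ~~ ((1%:M : 'M[F]_(rdim M)) <= U)%MS &
      forall V : 'M[F]_(rdim M), submod V -> (U <= V)%MS ->
        (V <= U)%MS \/ ((1%:M : 'M[F]_(rdim M)) <= V)%MS].

(* The image of A is contained in rad N = intersection of maximal submodules. *)
Definition radical_hom (M N : rmod) (A : 'M[F]_(rdim M, rdim N)) :=
  forall U : 'M[F]_(rdim N), maxsubmod U -> (A <= U)%MS.

Definition projective (P : rmod) :=
  forall (M N : rmod) (g : 'M[F]_(rdim M, rdim N)), is_hom g -> row_full g ->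
  forall h : 'M[F]_(rdim P, rdim N), is_hom h ->
  exists2 l : 'M[F]_(rdim P, rdim M), is_hom l & l *m g = h.

Record cplx := Cplx {
  cobj : int -> rmod;
  cdiff : forall n : int, 'M[F]_(rdim (cobj n), rdim (cobj (n + 1))) }.

Definition in_CI (X : cplx) :=
  forall n : int, [/\ projective (cobj X n), is_hom (cdiff X n),
                     radical_hom (cdiff X n) &
                     cdiff X n *m cdiff X (n + 1) = 0].

Definition cmap (X Y : cplx) :=
  forall n : int, 'M[F]_(rdim (cobj X n), rdim (cobj Y n)).

Definition is_cmor (X Y : cplx) (f : cmap X Y) :=
  forall n : int, is_hom (f n) /\ cdiff X n *m f (n + 1) = f n *m cdiff Y n.

Definition split_mono (X Y : cplx) (g : cmap X Y) :=
  exists r : cmap Y X, is_cmor r /\ forall n, g n *m r n = 1%:M.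

Definition split_epi (X Y : cplx) (h : cmap X Y) :=
  exists s : cmap Y X, is_cmor s /\ forall n, s n *m h n = 1%:M.

(* Irreducible morphism in C_I(P(L)); the composite "h after g" is the
   pointwise matrix product g n *m h n. *)
Definition irreducible (X Y : cplx) (f : cmap X Y) :=
  [/\ is_cmor f, ~ split_mono f, ~ split_epi f &
      forall Z : cplx, in_CI Z ->
      forall (g : cmap X Z) (h : cmap Z Y), is_cmor g -> is_cmor h ->
      (forall n, f n = g n *m h n) -> split_mono g \/ split_epi h].

Definition rideal (I : {vspace L}) := forall a b : L, a \in I -> a * b \in I.

Definition max_rideal (I : {vspace L}) :=
  [/\ rideal I, I != fullv &
      forall J : {vspace L}, rideal J -> (I <= J)%VS -> J = I \/ J = fullv].

Definition non_semisimple :=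
  exists2 a : L, a != 0 & forall I : {vspace L}, max_rideal I -> a \in I.

End Defs.

(* The brutal truncation Z = sigma_{>= -(t+1)} Y is again an object of C_I, and since X vanishes
   in degrees <= -(t+1), f factors as X -> Z -> Y through the inclusion.  By irreducibility either
   the inclusion Z -> Y is a split epimorphism, which forces Y^n = 0 for n < -(t+1), or the
   corestriction X -> Z is a split monomorphism.  In the latter case a retraction, precomposed
   with the degreewise projection Y -> Z, is a retraction of f: the projection fails to commute
   with the differentials only from degree -(t+2) to -(t+1), where the retraction lands in
   X^{-(t+1)} = 0.  As f is not split mono, only the first case remains. *)
From mathcomp Require Import all_boot all_order all_algebra all_field.
From mathcomp Require Import zify.
Set Implicit Arguments. Unset Strict Implicit. Unset Printing Implicit Defensive.
Import Order.TTheory GRing.Theory.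
Local Open Scope ring_scope.

Section Truncation.
Variables (F : fieldType) (L : falgType F).

Lemma eq_mx_nrows0 m n (A B : 'M[F]_(m, n)) : m = 0%N -> A = B.
Proof. by move=> m0; subst m; rewrite (flatmx0 A) (flatmx0 B). Qed.

Lemma eq_mx_ncols0 m n (A B : 'M[F]_(m, n)) : n = 0%N -> A = B.
Proof. by move=> n0; subst n; rewrite (thinmx0 A) (thinmx0 B). Qed.

Lemma scalar1_mx_eq0 n : (1%:M : 'M[F]_n) = 0 -> n = 0%N.
Proof. by move=> /(congr1 mxrank); rewrite mxrank1 mxrank0. Qed.

Lemma is_hom_mul (M N P : rmod L) (A : 'M[F]_(rdim M, rdim N)) (B : 'M_(rdim N, rdim P)) :
  is_hom A -> is_hom B -> is_hom (A *m B).
Proof. by move=> homA homB a; rewrite mulmxA homA -!mulmxA homB. Qed.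

Lemma is_hom1 (M : rmod L) : is_hom (1%:M : 'M[F]_(rdim M)).
Proof. by move=> a; rewrite mulmx1 mul1mx. Qed.

Definition rmod0 : rmod L.
Proof.
refine (@RMod F L 0 (fun _ => 0) _ _ _).
- by move=> c a b; rewrite scaler0 addr0.
- by rewrite flatmx0.
- by move=> a b; rewrite mul0mx.
Defined.

Definition mask (b : bool) (M : rmod L) := if b then M else rmod0.

Definition maskmx (b1 b2 : bool) (M N : rmod L) (A : 'M[F]_(rdim M, rdim N)) :
  'M[F]_(rdim (mask b1 M), rdim (mask b2 N)) :=
  match b1, b2 with true, true => A | _, _ => 0 end.

Lemma maskmx0 b1 b2 (M N : rmod L) : maskmx b1 b2 (0 : 'M_(rdim M, rdim N)) = 0.
Proof. by case: b1; case: b2. Qed.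

Lemma maskmx_mul (b1 b2 b3 : bool) (M N P : rmod L)
    (A : 'M[F]_(rdim M, rdim N)) (B : 'M_(rdim N, rdim P)) :
  (b1 -> b3 -> ~~ b2 -> A *m B = 0) ->
  maskmx b1 b2 A *m maskmx b2 b3 B = maskmx b1 b3 (A *m B).
Proof.
by case: b1; case: b2; case: b3 => //= AB0; rewrite ?mulmx0 ?mul0mx ?AB0.
Qed.

Lemma maskmx_mulr b1 (M N P : rmod L) (A : 'M[F]_(rdim M, rdim N)) (B : 'M_(rdim N, rdim P)) :
  maskmx b1 true A *m B = maskmx b1 true (A *m B).
Proof. exact: (@maskmx_mul b1 true true). Qed.

Lemma maskmx_mull b3 (M N P : rmod L) (A : 'M[F]_(rdim M, rdim N)) (B : 'M_(rdim N, rdim P)) :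
  A *m maskmx true b3 B = maskmx true b3 (A *m B).
Proof. exact: (@maskmx_mul true true b3). Qed.

Lemma mask_projective b (M : rmod L) : projective M -> projective (mask b M).
Proof.
case: b => // _ M' N' g _ _ h _; exists 0; first by move=> a; rewrite mulmx0 mul0mx.
exact: eq_mx_nrows0.
Qed.

Lemma maskmx_hom b1 b2 (M N : rmod L) (A : 'M[F]_(rdim M, rdim N)) :
  is_hom A -> is_hom (maskmx b1 b2 A).
Proof. by case: b1; case: b2 => //= _ a; rewrite ?mulmx0 ?mul0mx. Qed.

Lemma maskmx_radical b1 b2 (M N : rmod L) (A : 'M[F]_(rdim M, rdim N)) :
  radical_hom A -> radical_hom (maskmx b1 b2 A).
Proof. by case: b1; case: b2 => //= _ U _; rewrite sub0mx. Qed.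

Variable m : int.

Definition trunc (Y : cplx L) : cplx L :=
  @Cplx F L (fun n => mask (m <= n) (cobj Y n))
            (fun n => maskmx (m <= n) (m <= n + 1) (cdiff Y n)).

Definition trunc_incl (Y : cplx L) : cmap (trunc Y) Y :=
  fun n => maskmx (m <= n) true (1%:M : 'M[F]_(rdim (cobj Y n))).

Definition trunc_proj (Y : cplx L) : cmap Y (trunc Y) :=
  fun n => maskmx true (m <= n) (1%:M : 'M[F]_(rdim (cobj Y n))).

Lemma in_CI_trunc (Y : cplx L) : in_CI Y -> in_CI (trunc Y).
Proof.
move=> CIY n; have [projY homY radY ddY] := CIY n; split.
- exact: mask_projective.
- exact: maskmx_hom.
- exact: maskmx_radical.
- by rewrite /= maskmx_mul ?ddY ?maskmx0 //; lia.
Qed.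

Lemma is_cmor_trunc_incl (Y : cplx L) : is_cmor (trunc_incl Y).
Proof.
move=> n; split; first exact: (maskmx_hom (m <= n) true (is_hom1 (cobj Y n))).
rewrite /trunc_incl /= (@maskmx_mul _ _ true); last by lia.
by rewrite maskmx_mulr mulmx1 mul1mx.
Qed.

Lemma is_hom_trunc_proj (Y : cplx L) n : is_hom (trunc_proj Y n).
Proof. exact: (maskmx_hom true (m <= n) (is_hom1 (cobj Y n))). Qed.

Lemma trunc_proj_incl (Y : cplx L) n :
  m <= n -> trunc_proj Y n *m trunc_incl Y n = 1%:M.
Proof. by move=> mn; rewrite (@maskmx_mul true _ true) ?mulmx1 // mn. Qed.

Lemma trunc_proj_diff (Y : cplx L) n :
  n + 1 != m -> trunc_proj Y n *m cdiff (trunc Y) n = cdiff Y n *m trunc_proj Y (n + 1).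
Proof.
move=> n1m; rewrite /trunc_proj /= (@maskmx_mul true); last by lia.
by rewrite maskmx_mull mulmx1 mul1mx.
Qed.

Lemma split_epi_trunc_incl (Y : cplx L) :
  split_epi (trunc_incl Y) -> forall n, n < m -> rdim (cobj Y n) = 0%N.
Proof.
move=> [s [_ sK]] n ltnm; move: (s n : 'M_(_, rdim (mask (m <= n) (cobj Y n)))) (sK n).
rewrite /trunc_incl /=; have -> : (m <= n) = false by lia.
by move=> sn; rewrite mulmx0 => /esym /scalar1_mx_eq0.
Qed.

Section Corestriction.
Variables (X Y : cplx L) (f : cmap X Y).
Hypothesis X_vanish : forall n, n <= m -> rdim (cobj X n) = 0%N.

Definition trunc_corestr : cmap X (trunc Y) := fun n => f n *m trunc_proj Y n.

Lemma is_cmor_trunc_corestr : is_cmor f -> is_cmor trunc_corestr.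
Proof.
move=> fmor n; have [homf fdiff] := fmor n; split.
  exact: is_hom_mul homf (is_hom_trunc_proj Y n).
have [/X_vanish Xn0 | ltmn] := leP n m; first exact: eq_mx_nrows0.
by rewrite -mulmxA trunc_proj_diff ?mulmxA ?fdiff //; lia.
Qed.

Lemma trunc_corestr_incl n : f n = trunc_corestr n *m trunc_incl Y n.
Proof.
have [lemn | /ltW /X_vanish Xn0] := leP m n; last exact: eq_mx_nrows0.
by rewrite -mulmxA trunc_proj_incl // mulmx1.
Qed.

Lemma split_mono_trunc_corestr : split_mono trunc_corestr -> split_mono f.
Proof.
move=> [r [rmor rK]]; exists (fun n => trunc_proj Y n *m r n); split=> n; last first.
  by rewrite mulmxA rK.
have [homr rdiff] := rmor n; split; first exact: is_hom_mul (is_hom_trunc_proj Y n) homr.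
have [/eqP n1m | n1m] := boolP (n + 1 == m).
  by apply: eq_mx_ncols0; apply: X_vanish; rewrite n1m.
by rewrite mulmxA -[RHS]mulmxA -rdiff mulmxA trunc_proj_diff.
Qed.

End Corestriction.
End Truncation.

Theorem proposition8 (F : fieldType) (L : falgType F) (X Y : cplx L)
  (t : nat) (f : cmap X Y) :
  non_semisimple L -> in_CI X -> in_CI Y ->
  (forall i : int, 0 < i -> rdim (cobj X i) = 0%N) ->
  (forall i : int, 0 < i -> rdim (cobj Y i) = 0%N) ->
  (0 < t)%N ->
  (forall i : nat, (t < i)%N -> rdim (cobj X (- i%:Z)) = 0%N) ->
  rdim (cobj X (- t%:Z)) != 0%N ->
  irreducible f ->
  forall k : nat, (t.+2 <= k)%N -> rdim (cobj Y (- k%:Z)) = 0%N.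
Proof.
move=> _ _ CIY _ _ _ X_low _ [fmor not_split_mono _ irr] k t2k.
have X_vanish n : n <= - (t%:Z + 1) -> rdim (cobj X n) = 0%N.
  by case: n => [p | p] mp; [lia | rewrite NegzE; apply: X_low; lia].
have [split_g | split_h] := irr _ (in_CI_trunc _ CIY) _ _
  (is_cmor_trunc_corestr X_vanish fmor) (is_cmor_trunc_incl _ Y)
  (trunc_corestr_incl f X_vanish).
  by case: not_split_mono; exact: split_mono_trunc_corestr split_g.
by apply: (split_epi_trunc_incl split_h); lia.
Qed.
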